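(* In the setting described in the context (with any one of the three learning-rate setups (a), (b), (c)), there exists a constant $C$ such that for any $m\ge0$ and any integer $t\in[t_m,t_{m+1}]$, $$\|w_t-w_*\|\le C\big(\bar\alpha_m+\|w_{t_m}-w_*\|\big),\qquad\|w_t-w_{t_m}\|\le\bar\alpha_m\,C\,\big(\|w_{t_m}-w_*\|+1\big),$$ and furthermore, for any $t\ge0$, $$\|w_t-w_*\|\le\Big(\|w_0-w_*\|+C\sum_{\tau=0}^{t-1}\alpha_\tau\Big)\exp\Big(C\sum_{\tau=0}^{t-1}\alpha_\tau\Big).$$
   Context: Setting. $\mathcal{Y}$ is a measurable space, $\{Y_t\}$ a sequence in $\mathcal{Y}$ (a Markov chain with stationary distribution $d_{\mathcal{Y}}$). $H:\mathbb{R}^d\times\mathcal{Y}\to\mathbb{R}^d$, $h(w)=\mathbb{E}_{y\sim d_{\mathcal{Y}}}[H(w,y)]$; for some norm $\|\cdot\|$ and $\kappa\in[0,1)$, $\|h(w)-h(w')\|\le\kappa\|w-w'\|$, with fixed point $w_*$; $\|H(w,y)-H(w',y)\|\le L_h\|w-w'\|$ for all $w,w',y$ and $\sup_y\|H(0,y)\|<\infty$. Iterates: $w_0\in\mathbb{R}^d$, $w_{t+1}=w_t+\alpha_t(H(w_t,Y_{t+1})-w_t)$. Learning-rate setups with $C_\alpha>0$: (a) $\alpha_t=\frac{C_\alpha}{t+3}$, $T_m=\frac{C_\alpha\ln^{\nu_1}(m+3)}{m+3}$, $\nu_1\in(0,1)$; (b) $\alpha_t=\frac{C_\alpha}{(t+3)^\nu}$,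 $\nu\in(\frac23,1)$, $T_m=\frac{C_\alpha}{(m+3)^{\nu_2}}$, $\frac12<\nu_2<\frac\nu{2-\nu}$; (c) $\alpha_t=\frac{C_\alpha}{(t+3)\ln^\nu(t+3)}$, $\nu\in(0,1)$, $T_m=\frac{C_\alpha}{m+3}$. Anchors: $t_0=0$, $t_{m+1}=\min\{k:\sum_{t=t_m}^{k-1}\alpha_t\ge T_m\}$, and $\bar\alpha_m=\sum_{t=t_m}^{t_{m+1}-1}\alpha_t$. *)

From HB Require Import structures.
From mathcomp Require Import all_boot all_order all_algebra.
From mathcomp Require Import all_classical all_reals all_analysis.
Set Implicit Arguments. Unset Strict Implicit. Unset Printing Implicit Defensive.
Import Order.TTheory GRing.Theory Num.Theory.
Local Open Scope ring_scope.

Definition is_norm (R : realType) (d : nat) (N : 'rV[R]_d -> R) : Prop :=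
  [/\ forall x, 0 <= N x,
      forall x, N x = 0 -> x = 0,
      forall (a : R) x, N (a *: x) = `|a| * N x
    & forall x y, N (x + y) <= N x + N y].

Definition expect_vec (R : realType) (dY : measure_display)
    (Y : measurableType dY) (P : probability Y R) (d : nat)
    (F : Y -> 'rV[R]_d) : 'rV[R]_d :=
  \row_i Rintegral P setT (fun y => F y 0 i).

Fixpoint sa_iter (R : realType) (d : nat) (Y : Type)
    (H : 'rV[R]_d -> Y -> 'rV[R]_d) (alpha : nat -> R) (Ys : nat -> Y)
    (w0 : 'rV[R]_d) (t : nat) : 'rV[R]_d :=
  match t with
  | 0 => w0
  | t'.+1 => let w := sa_iter H alpha Ys w0 t' in
             w + alpha t' *: (H w (Ys t'.+1) - w)
  end.

Definition lr_setup (R : realType) (alpha T : nat -> R) : Prop :=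
  (exists (Ca nu1 : R), 0 < Ca /\ 0 < nu1 < 1 /\
     (forall t, alpha t = Ca / (t + 3)%:R) /\
     (forall m, T m = Ca * (ln (m + 3)%:R) `^ nu1 / (m + 3)%:R))
  \/
  (exists (Ca nu nu2 : R), 0 < Ca /\ 2/3 < nu < 1 /\ 1/2 < nu2 < nu / (2 - nu) /\
     (forall t, alpha t = Ca / (t + 3)%:R `^ nu) /\
     (forall m, T m = Ca / (m + 3)%:R `^ nu2))
  \/
  (exists (Ca nu : R), 0 < Ca /\ 0 < nu < 1 /\
     (forall t, alpha t = Ca / ((t + 3)%:R * (ln (t + 3)%:R) `^ nu)) /\
     (forall m, T m = Ca / (m + 3)%:R)).

(* tm is the anchor sequence: t_0 = 0 and
   t_{m+1} = min { k : sum_{t = t_m}^{k-1} alpha_t >= T_m }. *)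
Definition is_anchors (R : realType) (alpha T : nat -> R) (tm : nat -> nat) : Prop :=
  tm 0%N = 0%N /\
  forall m : nat,
    T m <= \sum_(tm m <= t < tm m.+1) alpha t /\
    (forall k : nat, (k < tm m.+1)%N -> \sum_(tm m <= t < k) alpha t < T m).

From HB Require Import structures.
From mathcomp Require Import all_boot all_order all_algebra.
From mathcomp Require Import all_classical all_reals all_analysis.
From mathcomp Require Import ring lra.
Set Implicit Arguments. Unset Strict Implicit. Unset Printing Implicit Defensive.
Import Order.TTheory GRing.Theory Num.Theory.
Local Open Scope ring_scope.

(* Since H is Lipschitz and H(0, .) is bounded, ||H(w, y) - w|| grows at most
   linearly in ||w - z|| + ||z - w_*|| for any reference point z.  Hence
   x_k = ||w_k - z|| obeys x_{k+1} <= x_k (1 + c alpha_k) + c alpha_k b, and a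
   discrete Gronwall argument gives x_t <= (x_s + c b S) exp(c S), where S is
   the sum of the step sizes from s to t.  In each learning-rate setup the
   alpha_t and T_m are bounded, so every anchor window has step-size sum
   abar_m <= 2A and exp(c S) stays bounded inside a window; choosing
   z = w_{t_m} and z = w_* yields the three estimates. *)

Section StepSizes.
Variable R : realType.

Lemma divr_ge0_le_lbound (a q D : R) : 0 <= a -> 0 < q -> q <= D ->
  0 <= a / D <= a / q.
Proof.
move=> a_ge0 q_gt0 le_qD; have D_gt0 : 0 < D := lt_le_trans q_gt0 le_qD.
rewrite divr_ge0 ?(ltW D_gt0) //=.
by rewrite ler_wpM2l // lef_pV2 ?posrE.
Qed.

Lemma divr_ge0_le_ge1 (a D : R) : 0 <= a -> 1 <= D -> 0 <= a / D <= a.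
Proof. by move=> a_ge0 D_ge1; have := divr_ge0_le_lbound a_ge0 ltr01 D_ge1; rewrite divr1. Qed.

Lemma powR_ge1 (x r : R) : 1 <= x -> 0 <= r -> 1 <= x `^ r.
Proof. by move=> x_ge1 r_ge0; rewrite -(powRr0 x) ler_powR. Qed.

Lemma powR_le_max1 (a r : R) : 0 < a -> 0 <= r <= 1 -> a `^ r <= Num.max 1 a.
Proof.
move=> a_gt0 /andP[r_ge0 r_le1]; have [a_ge1|a_lt1] := lerP 1 a.
  exact: ler1_powR.
by rewrite -(powRr0 a) ger_powR ?a_gt0 ?(ltW a_lt1).
Qed.

Lemma natr_add3_ge1 (t : nat) : 1 <= (t + 3)%:R :> R.
Proof. by rewrite ler1n addn3. Qed.

Lemma lr_setup_bounded (alpha T : nat -> R) : lr_setup alpha T ->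
  exists A, (forall t, 0 <= alpha t <= A) /\ (forall m, T m <= A).
Proof.
case=> [[Ca [nu [Ca_gt0 [/andP[nu_gt0 nu_lt1] [ha hT]]]]]
      |[[Ca [nu [nu2 [Ca_gt0 [/andP[nu_gt0 _] [/andP[nu2_gt0 _] [ha hT]]]]]]]
      |[Ca [nu [Ca_gt0 [/andP[nu_gt0 _] [ha hT]]]]]]].
- exists Ca; split=> [t|m]; rewrite ?ha ?hT.
    exact: divr_ge0_le_ge1 (ltW Ca_gt0) (natr_add3_ge1 t).
  have x_ge1 := natr_add3_ge1 m; have x_gt0 := lt_le_trans ltr01 x_ge1.
  rewrite ler_pdivrMr // ler_wpM2l ?(ltW Ca_gt0) //.
  apply: le_trans (powR_le_max1 _ _) _.
  + by rewrite ln_gt0 // ltr1n addn3.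
  + by rewrite (ltW nu_gt0) (ltW nu_lt1).
  + by rewrite ge_max x_ge1 (ltW (ln_sublinear x_gt0)).
- have nu_ge0 : 0 <= nu by lra.
  have nu2_ge0 : 0 <= nu2 by lra.
  exists Ca; split=> [t|m]; rewrite ?ha ?hT.
    exact: divr_ge0_le_ge1 (ltW Ca_gt0) (powR_ge1 (natr_add3_ge1 t) nu_ge0).
  by case/andP: (divr_ge0_le_ge1 (ltW Ca_gt0) (powR_ge1 (natr_add3_ge1 m) nu2_ge0)).
- have ln3_gt0 : 0 < ln (3%:R : R) by rewrite ln_gt0 // ltr1n.
  set q := ln (3%:R : R) `^ nu.
  have q_gt0 : 0 < q := powR_gt0 _ ln3_gt0.
  exists (Ca + Ca / q); split=> [t|m]; rewrite ?ha ?hT.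
    have le_q : q <= (t + 3)%:R * ln (t + 3)%:R `^ nu.
      rewrite -[q]mul1r ler_pM ?powR_ge0 ?natr_add3_ge1 ?(ltW q_gt0) //.
      rewrite ge0_ler_powR ?(ltW nu_gt0) ?nnegrE ?(ltW ln3_gt0) //.
        by rewrite ln_ge0 // ler1n addn3.
      by rewrite ler_ln ?posrE ?ltr0n ?addn3 // ler_nat !ltnS.
    case/andP: (divr_ge0_le_lbound (ltW Ca_gt0) q_gt0 le_q) => -> le_Caq.
    by rewrite /= (le_trans le_Caq) // lerDr (ltW Ca_gt0).
  case/andP: (divr_ge0_le_ge1 (ltW Ca_gt0) (natr_add3_ge1 m)) => _ /le_trans; apply.
  by rewrite lerDl divr_ge0 ?(ltW Ca_gt0) ?(ltW q_gt0).
Qed.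

End StepSizes.

Lemma anchor_window_sum_le (R : realType) (alpha T : nat -> R) (tm : nat -> nat)
    (A : R) (m : nat) :
  is_anchors alpha T tm -> (forall t, 0 <= alpha t <= A) -> T m <= A ->
  \sum_(tm m <= t < tm m.+1) alpha t <= A + A.
Proof.
move=> [_ anchors] alpha_bnd le_TA.
have A_ge0 : 0 <= A by case/andP: (alpha_bnd 0%N) => /le_trans; apply.
have [lt_window|] := ltnP (tm m) (tm m.+1); last first.
  by move=> le_window; rewrite big_geq // addr_ge0.
have last_def : tm m.+1 = (tm m.+1).-1.+1 by rewrite prednK // (leq_ltn_trans _ lt_window).
rewrite last_def big_nat_recr /=; last by rewrite -ltnS -last_def.
have lt_prefix : \sum_(tm m <= t < (tm m.+1).-1) alpha t < T m.
  by apply: (anchors m).2; rewrite {2}last_def ltnSn.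
by case/andP: (alpha_bnd (tm m.+1).-1) => _ le_last; lra.
Qed.

Lemma discrete_gronwall (R : realType) (x a : nat -> R) (c b : R) (n0 : nat) :
  0 <= c -> 0 <= b -> (forall k, 0 <= a k) -> 0 <= x n0 ->
  (forall k, (n0 <= k)%N -> x k.+1 <= x k * (1 + c * a k) + c * a k * b) ->
  forall n, (n0 <= n)%N ->
    x n <= (x n0 + c * b * \sum_(n0 <= j < n) a j)
           * expR (c * \sum_(n0 <= j < n) a j).
Proof.
move=> c_ge0 b_ge0 a_ge0 x0_ge0 x_rec.
suff bound k : x (n0 + k)%N <= (x n0 + c * b * \sum_(n0 <= j < n0 + k) a j)
                               * expR (c * \sum_(n0 <= j < n0 + k) a j).
  by move=> n /subnKC <-; apply: bound.
elim: k => [|k IH].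
  by rewrite addn0 big_geq // !mulr0 addr0 expR0 mulr1.
rewrite addnS big_nat_recr ?leq_addr //=.
set S := \sum_(n0 <= j < n0 + k) a j in IH *; set ak := a (n0 + k)%N.
have S_ge0 : 0 <= S by rewrite sumr_ge0.
have cak_ge0 : 0 <= c * ak := mulr_ge0 c_ge0 (a_ge0 _).
have eS_ge1 : 1 <= expR (c * S) by rewrite -expR0 ler_expR mulr_ge0.
have ea_ge : 1 + c * ak <= expR (c * ak) := expR_ge1Dx _.
have bound_ge0 : 0 <= (x n0 + c * b * S) * expR (c * S).
  by rewrite mulr_ge0 ?addr_ge0 ?mulr_ge0 ?expR_ge0.
rewrite [c * (S + ak)]mulrDr expRD; apply: le_trans (x_rec _ (leq_addr _ _)) _.
have IH_scaled : x (n0 + k)%N * (1 + c * ak)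
    <= (x n0 + c * b * S) * expR (c * S) * expR (c * ak).
  by apply: le_trans (ler_wpM2r _ IH) (ler_wpM2l bound_ge0 ea_ge); lra.
have inhom_le : c * ak * b <= c * ak * b * (expR (c * S) * expR (c * ak)).
  apply: ler_peMr; first exact: mulr_ge0.
  by rewrite -[1]mul1r ler_pM //; lra.
have -> : (x n0 + c * b * (S + ak)) * (expR (c * S) * expR (c * ak)) =
   (x n0 + c * b * S) * expR (c * S) * expR (c * ak)
   + c * ak * b * (expR (c * S) * expR (c * ak)) by ring.
exact: lerD.
Qed.

Section Norms.
Variables (R : realType) (d : nat) (N : 'rV[R]_d -> R).
Hypothesis normN : is_norm N.

Lemma is_norm_ge0 x : 0 <= N x.
Proof. by case: normN. Qed.

Lemma is_normZ (a : R) x : N (a *: x) = `|a| * N x.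
Proof. by case: normN. Qed.

Lemma is_norm_triangle x y : N (x + y) <= N x + N y.
Proof. by case: normN. Qed.

Lemma is_norm0 : N 0 = 0.
Proof. by rewrite -(scale0r (0 : 'rV[R]_d)) is_normZ normr0 mul0r. Qed.

Lemma is_normN x : N (- x) = N x.
Proof. by rewrite -scaleN1r is_normZ normrN1 mul1r. Qed.

Lemma is_norm_distD x y z : N (x - y) <= N (x - z) + N (z - y).
Proof.
have -> : x - y = (x - z) + (z - y) by rewrite addrA subrK.
exact: is_norm_triangle.
Qed.

Lemma lipschitz_linear_growth (Y : Type) (H : 'rV[R]_d -> Y -> 'rV[R]_d)
    (L B : R) (w_star : 'rV[R]_d) :
  (forall w w' y, N (H w y - H w' y) <= L * N (w - w')) ->
  (forall y, N (H 0 y) <= B) ->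
  exists2 c, 0 <= c &
    forall w z y, N (H w y - w) <= c * (N (w - z) + N (z - w_star) + 1).
Proof.
move=> H_lip H0_le; set l := `|L|.
have l_lip w w' y : N (H w y - H w' y) <= l * N (w - w').
  by apply: le_trans (H_lip w w' y) _; rewrite ler_wpM2r ?is_norm_ge0 ?ler_norm.
have l_ge0 : 0 <= l := normr_ge0 L.
have n_ge0 := is_norm_ge0 w_star.
exists ((l + 1) * (1 + N w_star) + `|B|); first by rewrite addr_ge0 ?mulr_ge0 ?addr_ge0.
move=> w z y.
(* Chaining the triangle inequality through H z y, H 0 y and z gives
   N (H w y - w) <= (l + 1) (N (w - z) + N (z - w_star) + N w_star) + B. *)
have wz_ge0 := is_norm_ge0 (w - z).
have zstar_ge0 := is_norm_ge0 (z - w_star).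
have dHz := is_norm_distD (H w y) w (H z y).
have dH0 := is_norm_distD (H z y) w (H 0 y).
have lip_wz := l_lip w z y.
have lip_z0 := l_lip z 0 y; rewrite subr0 in lip_z0.
have d0w : N (H 0 y - w) <= N (H 0 y) + N w by rewrite -(is_normN w) is_norm_triangle.
have dw := is_norm_distD w 0 z; rewrite !subr0 in dw.
have dz := is_norm_distD z 0 w_star; rewrite !subr0 in dz.
have B_le := H0_le y; have B_abs := ler_norm B.
have lz : l * N z <= l * (N (z - w_star) + N w_star) by rewrite ler_wpM2l.
have cross_ge0 : 0 <= (l + 1) * N w_star * (N (w - z) + N (z - w_star)).
  by rewrite !mulr_ge0 ?addr_ge0.
have B_cross_ge0 : 0 <= `|B| * (N (w - z) + N (z - w_star)) by rewrite mulr_ge0 ?addr_ge0.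
lra.
Qed.
End Norms.

Section Iterates.
Variables (R : realType) (d : nat) (Y : Type) (N : 'rV[R]_d -> R).
Variables (H : 'rV[R]_d -> Y -> 'rV[R]_d) (alpha : nat -> R) (Ys : nat -> Y).
Variables (w0 w_star : 'rV[R]_d) (c : R).
Hypothesis normN : is_norm N.
Hypothesis alpha_ge0 : forall t, 0 <= alpha t.
Hypothesis c_ge0 : 0 <= c.
Hypothesis H_growth :
  forall w z y, N (H w y - w) <= c * (N (w - z) + N (z - w_star) + 1).

Local Notation w := (sa_iter H alpha Ys w0).

Lemma sa_iter_step_le z k :
  N (w k.+1 - z) <= N (w k - z) * (1 + c * alpha k)
                    + c * alpha k * (N (z - w_star) + 1).
Proof.
have -> : w k.+1 - z = (w k - z) + alpha k *: (H (w k) (Ys k.+1) - w k).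
  by rewrite /= addrAC.
apply: le_trans (is_norm_triangle normN _ _) _.
rewrite is_normZ // ger0_norm //.
have := ler_wpM2l (alpha_ge0 k) (H_growth (w k) z (Ys k.+1)).
lra.
Qed.

Lemma sa_iter_dev_le s t : (s <= t)%N ->
  N (w t - w s) <= c * (N (w s - w_star) + 1) * (\sum_(s <= j < t) alpha j)
                   * expR (c * \sum_(s <= j < t) alpha j).
Proof.
move=> le_st.
have b_ge0 : 0 <= N (w s - w_star) + 1 by rewrite addr_ge0 ?is_norm_ge0.
have := discrete_gronwall (x := fun k => N (w k - w s)) c_ge0 b_ge0 alpha_ge0
  (is_norm_ge0 normN _) (fun k _ => sa_iter_step_le (w s) k) le_st.
by rewrite /= subrr is_norm0 // add0r.
Qed.

Lemma sa_iter_window_dev_le s t u (M : R) : (s <= t <= u)%N ->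
  \sum_(s <= j < u) alpha j <= M ->
  N (w t - w s) <= (\sum_(s <= j < u) alpha j) * (c * expR (c * M))
                   * (N (w s - w_star) + 1).
Proof.
move=> /andP[le_st le_tu] window_le.
have partial_le : \sum_(s <= j < t) alpha j <= \sum_(s <= j < u) alpha j.
  by rewrite (big_cat_nat le_st le_tu) /= lerDl sumr_ge0.
have partial_ge0 : 0 <= \sum_(s <= j < t) alpha j by rewrite sumr_ge0.
have e_ge0 : 0 <= N (w s - w_star) + 1 by rewrite addr_ge0 ?is_norm_ge0.
apply: le_trans (sa_iter_dev_le le_st) _.
have -> : (\sum_(s <= j < u) alpha j) * (c * expR (c * M)) * (N (w s - w_star) + 1)
  = c * (N (w s - w_star) + 1) * ((\sum_(s <= j < u) alpha j) * expR (c * M)) by ring.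
rewrite -mulrA ler_wpM2l ?mulr_ge0 // ler_pM ?expR_ge0 // ler_expR ler_wpM2l //.
exact: le_trans window_le.
Qed.

Lemma sa_iter_dist_le t :
  N (w t - w_star) <= (N (w0 - w_star) + c * \sum_(0 <= j < t) alpha j)
                      * expR (c * \sum_(0 <= j < t) alpha j).
Proof.
have step_le k : N (w k.+1 - w_star)
    <= N (w k - w_star) * (1 + c * alpha k) + c * alpha k * 1.
  by have := sa_iter_step_le w_star k; rewrite subrr is_norm0 // add0r.
have := discrete_gronwall (x := fun k => N (w k - w_star)) c_ge0 ler01 alpha_ge0
  (is_norm_ge0 normN _) (fun k _ => step_le k) (leq0n t).
by rewrite mulr1.
Qed.

Lemma sa_iter_window_dist_le s t u (M : R) : (s <= t <= u)%N ->
  \sum_(s <= j < u) alpha j <= M ->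
  N (w t - w_star) <= (1 + (1 + M) * (c * expR (c * M)))
                      * (\sum_(s <= j < u) alpha j + N (w s - w_star)).
Proof.
move=> window_t window_le.
have dist_le := is_norm_distD normN (w t) w_star (w s).
set S := \sum_(s <= j < u) alpha j in window_le *.
set C0 := c * expR (c * M); set e := N (w s - w_star) in dist_le *.
have S_ge0 : 0 <= S by rewrite sumr_ge0.
have e_ge0 : 0 <= e := is_norm_ge0 normN _.
have C0_ge0 : 0 <= C0 by rewrite mulr_ge0 ?expR_ge0.
have dev : N (w t - w s) <= S * C0 * (e + 1) := sa_iter_window_dev_le window_t window_le.
have SC0e_le : S * C0 * e <= M * C0 * e by rewrite ler_wpM2r // ler_wpM2r.
have MC0S_ge0 : 0 <= M * C0 * S by rewrite !mulr_ge0 // (le_trans S_ge0).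
have C0e_ge0 : 0 <= C0 * e by rewrite mulr_ge0.
lra.
Qed.

End Iterates.

Theorem lemma16 (R : realType) (d : nat)
  (dY : measure_display) (Yt : measurableType dY) (dist : probability Yt R)
  (N : 'rV[R]_d -> R) (H : 'rV[R]_d -> Yt -> 'rV[R]_d)
  (kappa L_h : R) (w_star : 'rV[R]_d)
  (alpha T : nat -> R) (tm : nat -> nat) (w0 : 'rV[R]_d) :
  is_norm N ->
  (forall w (i : 'I_1) (j : 'I_d), measurable_fun setT (fun y => H w y i j)) ->
  0 <= kappa < 1 ->
  (forall w w', N (expect_vec dist (H w) - expect_vec dist (H w'))
                  <= kappa * N (w - w')) ->
  expect_vec dist (H w_star) = w_star ->
  (forall w w' y, N (H w y - H w' y) <= L_h * N (w - w')) ->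
  (exists B : R, forall y, N (H 0 y) <= B) ->
  lr_setup alpha T ->
  is_anchors alpha T tm ->
  exists C : R, forall Ys : nat -> Yt,
    let w := sa_iter H alpha Ys w0 in
    let abar := fun m => \sum_(tm m <= t < tm m.+1) alpha t in
    (forall (m t : nat), (tm m <= t <= tm m.+1)%N ->
        N (w t - w_star) <= C * (abar m + N (w (tm m) - w_star)) /\
        N (w t - w (tm m)) <= abar m * C * (N (w (tm m) - w_star) + 1)) /\
    (forall t : nat,
        N (w t - w_star) <=
          (N (w0 - w_star) + C * \sum_(0 <= tau < t) alpha tau)
          * expR (C * \sum_(0 <= tau < t) alpha tau)).
Proof.
move=> normN _ _ _ _ H_lip [B H0_le] setup anchors.
have [c c_ge0 H_growth] := lipschitz_linear_growth normN w_star H_lip H0_le.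
have [A [alpha_bnd T_le]] := lr_setup_bounded setup.
have alpha_ge0 t : 0 <= alpha t by case/andP: (alpha_bnd t).
have A_ge0 : 0 <= A by case/andP: (alpha_bnd 0%N) => /le_trans; apply.
set C0 := c * expR (c * (A + A)).
have C0_ge0 : 0 <= C0 by rewrite mulr_ge0 ?expR_ge0.
have c_le_C0 : c <= C0 by rewrite ler_peMr // -expR0 ler_expR mulr_ge0 ?addr_ge0.
have C0_le : C0 <= 1 + (1 + (A + A)) * C0.
  by have := mulr_ge0 (addr_ge0 A_ge0 A_ge0) C0_ge0; lra.
exists (1 + (1 + (A + A)) * C0) => Ys w abar.
split=> [m t window_t|t].
  have abar_le : abar m <= A + A := anchor_window_sum_le anchors alpha_bnd (T_le m).
  split.
    exact (sa_iter_window_dist_le Ys w0 normN alpha_ge0 c_ge0 H_growth window_t abar_le).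
  apply: le_trans (sa_iter_window_dev_le Ys w0 normN alpha_ge0 c_ge0 H_growth
    window_t abar_le) _.
  by rewrite ler_wpM2r ?addr_ge0 ?is_norm_ge0 // ler_wpM2l ?sumr_ge0.
apply: le_trans (sa_iter_dist_le Ys w0 normN alpha_ge0 c_ge0 H_growth t) _.
have S_ge0 : 0 <= \sum_(0 <= tau < t) alpha tau by rewrite sumr_ge0.
have c_le := le_trans c_le_C0 C0_le.
by rewrite ler_pM ?expR_ge0 ?addr_ge0 ?mulr_ge0 ?is_norm_ge0 // ?lerD2l ?ler_expR
  ler_wpM2r.
Qed.
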